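(* For all integers $m,n\ge 2$, $\chi_{ei}(P_m\square P_n)=2$.
   Context: All graphs are finite and simple. $P_k$ denotes the path on $k$ vertices. A path $P_4$ in $G$ is a sequence $uxyv$ of four distinct vertices with $ux,xy,yv\in E(G)$; $u,v$ are its end vertices. An $e$-injective $k$-coloring of $G$ is a function $f:V(G)\to\{1,\dots,k\}$ with $f(u)\ne f(v)$ whenever $u,v$ are the end vertices of some path $P_4$ in $G$; $\chi_{ei}(G)$ is the least such $k$. In the Cartesian product $G\square H$ (vertex set $V(G)\times V(H)$) two vertices are adjacent if they are adjacent in one coordinate and equal in the other. *)

From mathcomp Require Import all_boot.
Set Implicit Arguments. Unset Strict Implicit. Unset Printing Implicit Defensive.

Record sgraph := SGraph {
  vertex :> finType;
  adj : rel vertex;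
  adj_sym : symmetric adj;
  adj_irr : irreflexive adj }.

Definition p4_ends (G : sgraph) (u v : G) : bool :=
  [exists x : G, exists y : G,
    [&& uniq [:: u; x; y; v], adj u x, adj x y & adj y v]].

Definition ei_coloring (G : sgraph) (k : nat) (f : G -> 'I_k) : bool :=
  [forall u : G, forall v : G, p4_ends u v ==> (f u != f v)].

Definition ei_colorable (G : sgraph) (k : nat) : bool :=
  [exists f : {ffun G -> 'I_k}, ei_coloring f].

(* chi_ei(G): least k admitting an e-injective k-coloring.  Such k <= #|G|
   always exists (injective coloring), so the min over k <= #|G| is the true min. *)
Definition chi_ei (G : sgraph) : nat :=
  \big[minn/#|G|]_(k < #|G|.+1 | ei_colorable G k) k.

Definition path_adj (m : nat) : rel 'I_m := fun i j => (i.+1 == j) || (j.+1 == i).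

Lemma path_adj_sym m : symmetric (@path_adj m).
Proof. by move=> i j; rewrite /path_adj orbC. Qed.

Lemma path_adj_irr m : irreflexive (@path_adj m).
Proof. by move=> i; rewrite /path_adj orbb; apply/negbTE; rewrite eqn_leq ltnn. Qed.

Definition Path (m : nat) : sgraph := SGraph (@path_adj_sym m) (@path_adj_irr m).

Definition cart_adj (G H : sgraph) : rel (G * H)%type := fun a b =>
  (adj a.1 b.1 && (a.2 == b.2)) || ((a.1 == b.1) && adj a.2 b.2).

Lemma cart_adj_sym G H : symmetric (@cart_adj G H).
Proof. by move=> a b; rewrite /cart_adj (@adj_sym G a.1) (@adj_sym H a.2) (eq_sym a.1) (eq_sym a.2). Qed.

Lemma cart_adj_irr G H : irreflexive (@cart_adj G H).
Proof. by move=> a; rewrite /cart_adj !adj_irr !eqxx. Qed.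

Definition cart (G H : sgraph) : sgraph := SGraph (@cart_adj_sym G H) (@cart_adj_irr G H).

(* The grid P_m □ P_n is bipartite (colour a vertex by the parity of the sum of
   its coordinates), and the end vertices of a P_4 lie at odd distance along it,
   so the bipartition is an e-injective 2-colouring.  Conversely the square
   (0,0) (1,0) (1,1) (0,1) is a P_4, so one colour is not enough. *)

From mathcomp Require Import all_boot all_order.
Import Order.TTheory.

Set Implicit Arguments.
Unset Strict Implicit.
Unset Printing Implicit Defensive.

Lemma chi_ei_le (G : sgraph) (k : nat) :
  k <= #|G| -> ei_colorable G k -> chi_ei G <= k.
Proof.
move=> le_k_G colk.
exact: (@bigmin_le_cond _ nat _ _ (Ordinal (le_k_G : k < #|G|.+1)) _ val colk).
Qed.

Lemma chi_ei_ge (G : sgraph) (k : nat) :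
  k <= #|G| -> (forall j, j < k -> ~~ ei_colorable G j) -> k <= chi_ei G.
Proof.
move=> le_k_G not_col; apply: (@le_bigmin _ nat) => // j colj.
by rewrite leEnat leqNgt; apply: contraL colj; apply: not_col.
Qed.

Lemma p4_ends_card (G : sgraph) (u v : G) : p4_ends u v -> 4 <= #|G|.
Proof.
case/existsP=> x /existsP[y /and4P[/card_uniqP card_s _ _ _]].
by rewrite -[4]/(size [:: u; x; y; v]) -card_s max_card.
Qed.

Lemma p4_ends_not_ei_colorable (G : sgraph) (u v : G) (k : nat) :
  p4_ends u v -> k < 2 -> ~~ ei_colorable G k.
Proof.
move=> uv lt_k2; apply/existsP=> -[f /forallP/(_ u)/forallP/(_ v)/implyP/(_ uv)].
by case: k lt_k2 f => [|[|//]] _ f; case: (f u) => -[|[|//]] //; case: (f v) => -[|[|//]].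
Qed.

Definition bipartition (G : sgraph) (c : G -> bool) : Prop :=
  forall u v, adj u v -> c v = ~~ c u.

Lemma bipartition_ei_colorable (G : sgraph) (c : G -> bool) :
  bipartition c -> ei_colorable G 2.
Proof.
move=> bip; apply/existsP; exists [ffun v => inord (c v)].
apply/forallP=> u; apply/forallP=> v; apply/implyP.
case/existsP=> x /existsP[y /and4P[_ /bip ux /bip xy /bip yv]].
rewrite !ffunE -(inj_eq val_inj) /= !inordK ?ltnS ?leq_b1 //.
by rewrite yv xy ux; case: (c u).
Qed.

Lemma bipartite_chi_ei (G : sgraph) (c : G -> bool) (u v : G) :
  bipartition c -> p4_ends u v -> chi_ei G = 2.
Proof.
move=> bip uv; have le2G : 2 <= #|G| := leq_trans (isT : 2 <= 4) (p4_ends_card uv).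
apply/eqP; rewrite eqn_leq chi_ei_le ?chi_ei_ge //.
- by move=> j; apply: p4_ends_not_ei_colorable uv.
- exact: bipartition_ei_colorable bip.
Qed.

Lemma path_bipartition (m : nat) : bipartition (fun i : Path m => odd i).
Proof. by move=> i j /orP[] /eqP <- /=; rewrite ?negbK. Qed.

Lemma cart_bipartition (G H : sgraph) (cG : G -> bool) (cH : H -> bool) :
  bipartition cG -> bipartition cH ->
  bipartition (fun a : cart G H => cG a.1 (+) cH a.2).
Proof.
move=> bipG bipH a b /orP[/andP[ab1 /eqP ab2] | /andP[/eqP ab1 ab2]].
- by rewrite (bipG _ _ ab1) ab2 addNb.
- by rewrite -ab1 (bipH _ _ ab2) addbN.
Qed.

Lemma grid_square_p4_ends (m n : nat) :
  p4_ends (G := cart (Path m.+2) (Path n.+2)) (ord0, ord0) (ord0, inord 1).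
Proof.
apply/existsP; exists (inord 1, ord0).
apply/existsP; exists (inord 1, inord 1).
by rewrite /= /cart_adj /= /path_adj !inE !xpair_eqE -!val_eqE /= !inordK.
Qed.

Theorem theorem4p2 (m n : nat) : 2 <= m -> 2 <= n -> chi_ei (cart (Path m) (Path n)) = 2.
Proof.
case: m => [|[|m]] // _; case: n => [|[|n]] // _.
have bip := cart_bipartition (@path_bipartition m.+2) (@path_bipartition n.+2).
exact: bipartite_chi_ei bip (grid_square_p4_ends m n).
Qed.
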